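(* Let $k,n,m$ be positive integers with $1\le m\le kn$, and let $\mathcal{L}\subseteq\mathbb{R}^{n\times n}$ be a real linear subspace of dimension $r$ with ordered basis $\{S_1,\dots,S_r\}$. Let $P=[\mathrm{Vec}(S_1)\ \mathrm{Vec}(S_2)\ \cdots\ \mathrm{Vec}(S_r)]\in\mathbb{R}^{n^2\times r}$. Let $(E,X)\in\mathbb{R}^{m\times m}\times\mathbb{R}^{n\times m}$ be a real-form matrix eigenpair, i.e. $E=\mathrm{diag}(E_1,\dots,E_t,e_{2t+1},\dots,e_m)$ with $E_j=\begin{bmatrix}\alpha_j&\beta_j\\-\beta_j&\alpha_j\end{bmatrix}$ and $X=[u_1\ v_1\ \cdots\ u_t\ v_t\ \phi_{2t+1}\ \cdots\ \phi_m]$, as described in the context. Define $$U=\big[\,((XE^{k-1})^T\otimes I_n)P\ \ ((XE^{k-2})^T\otimes I_n)P\ \ \cdots\ \ (X^T\otimes I_n)P\,\big]\in\mathbb{R}^{mn\times kr},\qquad b=\mathrm{Vec}(-XE^k)\in\mathbb{R}^{mn}.$$ Then there exist matrices $A_0,A_1,\dots,A_{k-1}\in\mathcal{L}$ satisfying $$\sum_{i=0}^{k-1}A_iXE^i=-XE^k$$ (i.e. the monic matrix polynomial $\lambda^kI_n+\sum_{i=0}^{k-1}\lambda^iA_i$ has $(E,X)$ as a real matrix eigenpair) if and only if $UU^\dagger b=b$. In that case, the solutions are given by $$\mathrm{Vec}(A_i)=P\Big((e_{k-i}\otimes I_r)\big(U^\dagger b+(I_{kr}-U^\dagger U)y\big)\Big),\qquad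 i=0,1,\dots,k-1,$$ where $y\in\mathbb{R}^{kr}$ is an arbitrary vector. Moreover, the solution $(A_0,\dots,A_{k-1})$ is unique if and only if $UU^\dagger b=b$ and $U^\dagger U=I_{kr}$, in which case $$\mathrm{Vec}(A_i)=P\big((e_{k-i}\otimes I_r)U^\dagger b\big),\qquad i=0,1,\dots,k-1.$$
   Context: For a matrix $A\in\mathbb{R}^{n\times n}$, $\mathrm{Vec}(A)\in\mathbb{R}^{n^2}$ is the vector obtained by stacking the columns of $A$ on top of one another. $\otimes$ denotes the Kronecker product, $U^\dagger$ the Moore–Penrose pseudoinverse of $U$, $I_q$ the $q\times q$ identity matrix, and $e_j$ (for $1\le j\le k$) denotes the $j$-th row of $I_k$, so $e_{k-i}\otimes I_r\in\mathbb{R}^{r\times kr}$. Each $A\in\mathcal{L}$ is written uniquely as $A=\sum_{\ell=1}^r\alpha_\ell S_\ell$, so that $\mathrm{Vec}(A)=P[\alpha_1,\dots,\alpha_r]^T$. Real-form eigendata: given $m$ eigenvalues of which $t$ are complex conjugate pairs $\alpha_j\pm i\beta_j$ ($j=1,\dots,t$) with eigenvectors $u_j\pm iv_j$, and $m-2t$ are real eigenvalues $e_{2t+1},\dots,e_m$ with real eigenvectors $\phi_{2t+1},\dots,\phi_m\in\mathbb{R}^n$, the real-form matrix representations are $E$ and $X$ as in the claim. *)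

From HB Require Import structures.
From mathcomp Require Import all_boot all_order all_algebra.
From mathcomp Require Import reals.
From mathcomp.real_closed Require Export mxtens.

Set Implicit Arguments.
Unset Strict Implicit.
Unset Printing Implicit Defensive.

Import Order.TTheory GRing.Theory Num.Theory.
Local Open Scope ring_scope.

Section Defs.
Variable R : realType.

(* Vec(A): stack the columns of A : 'M_(n,m) into a column vector of length m*n;
   entry of index j*n + i (j-th column, i-th row) is A i j.  Kronecker products use
   mxtens' tensmx (A *t B), whose index convention is the same (i1 * p + i2). *)
Definition Vec {n m : nat} (A : 'M[R]_(n, m)) : 'cV[R]_(m * n) :=
  \col_c A (mxtens_unindex c).2 (mxtens_unindex c).1.

Definition is_pinv {p q : nat} (A : 'M[R]_(p, q)) (Ad : 'M[R]_(q, p)) : Prop :=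
  [/\ A *m Ad *m A = A, Ad *m A *m Ad = Ad,
      (A *m Ad)^T = A *m Ad & (Ad *m A)^T = Ad *m A].

Definition in_span {n r : nat} (S : 'I_r -> 'M[R]_n) (A : 'M[R]_n) : Prop :=
  exists a : 'I_r -> R, A = \sum_(l < r) a l *: S l.

Definition lin_indep {n r : nat} (S : 'I_r -> 'M[R]_n) : Prop :=
  forall a : 'I_r -> R, \sum_(l < r) a l *: S l = 0 -> forall l, a l = 0.

Definition Pmat {n r : nat} (S : 'I_r -> 'M[R]_n) : 'M[R]_(n * n, r) :=
  \matrix_(i, l) Vec (S l) i 0.

(* Real-form eigenvalue matrix E = diag(E_1,...,E_t, e_{2t+1},...,e_m),
   E_p = [[alpha_p, beta_p], [-beta_p, alpha_p]] (0-indexed blocks p < t,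
   occupying rows/columns 2p, 2p+1); e is indexed by the 0-based position. *)
Definition real_form_E (m t : nat) (alpha beta e : nat -> R) : 'M[R]_m :=
  \matrix_(i, j)
    if (i < 2 * t)%N && (j < 2 * t)%N && (i./2 == j./2) then
      (if i == j then alpha i./2
       else if ~~ odd i then beta i./2 else - beta i./2)
    else if (2 * t <= i)%N && (i == j) then e i else 0.

(* (E, X) is a real-form matrix eigenpair: E has the real-form structure with
   t nonreal conjugate pairs (beta_p <> 0) and m - 2t real eigenvalues, and the
   eigenvectors u_p + i v_p (columns 2p, 2p+1 of X) and phi_j (columns j >= 2t)
   are nonzero. *)
Definition real_form_eigpair {n m : nat} (E : 'M[R]_m) (X : 'M[R]_(n, m)) : Prop :=
  exists (t : nat) (alpha beta e : nat -> R),
    [/\ (2 * t <= m)%N,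
        forall p, (p < t)%N -> beta p != 0,
        E = real_form_E m t alpha beta e,
        forall p, (p < t)%N -> exists j : 'I_m, j./2 = p /\ col j X != 0
      & forall j : 'I_m, (2 * t <= j)%N -> col j X != 0].

(* U = [ ((X E^{k-1})^T (x) I_n) P  ...  (X^T (x) I_n) P ]  in R^{mn x kr}:
   column block number b (0-based) uses the power k-1-b = rev_ord b. *)
Definition Umat {k n m r : nat} (S : 'I_r -> 'M[R]_n) (E : 'M[R]_m)
  (X : 'M[R]_(n, m)) : 'M[R]_(m * n, k * r) :=
  \matrix_(i, c)
    ((((X *m E ^+ (rev_ord (mxtens_unindex c).1))^T *t (1%:M : 'M[R]_n))
        *m Pmat S) i (mxtens_unindex c).2).

Definition bvec {n m : nat} (k : nat) (E : 'M[R]_m) (X : 'M[R]_(n, m))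
  : 'cV[R]_(m * n) := Vec (- (X *m E ^+ k)).

(* e_{k-i} (x) I_r in R^{r x kr}, where e_{k-i} is the (k-i)-th row of I_k
   (1-based), i.e. row (rev_ord i) for i : 'I_k. *)
Definition sel {k : nat} (r : nat) (i : 'I_k) : 'M[R]_(r, k * r) :=
  castmx (mul1n r, erefl (k * r)) (row (rev_ord i) (1%:M : 'M[R]_k) *t (1%:M : 'M[R]_r)).

Definition is_solution {k n m r : nat} (S : 'I_r -> 'M[R]_n) (E : 'M[R]_m)
  (X : 'M[R]_(n, m)) (A : 'I_k -> 'M[R]_n) : Prop :=
  (forall i, in_span S (A i)) /\
  \sum_(i < k) A i *m X *m E ^+ i = - (X *m E ^+ k).

End Defs.

From HB Require Import structures.
From mathcomp Require Import all_boot all_order all_algebra.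
From mathcomp Require Import reals.
From mathcomp.real_closed Require Import mxtens.

(* The map z |-> (A_0, ..., A_{k-1}) reading the coordinates of each A_i
   (in the basis S) off its block of z is a bijection between the
   solutions of U z = b and the solutions of sum_i A_i X E^i = - X E^k,
   because vec(A_i X E^i) = ((X E^i)^T (x) I_n) vec(A_i). *)

Set Implicit Arguments.
Unset Strict Implicit.
Unset Printing Implicit Defensive.
Import Order.TTheory GRing.Theory Num.Theory.
Local Open Scope ring_scope.

Section GeneralizedInverse.
Variables (F : pzRingType) (p q : nat) (U : 'M[F]_(p, q)) (Ud : 'M[F]_(q, p)).
Hypothesis UUdU : U *m Ud *m U = U.

Lemma ginv_solvableP (b : 'cV[F]_p) : (exists z, U *m z = b) <-> U *m Ud *m b = b.
Proof.
split=> [[z <-]|hb]; first by rewrite mulmxA UUdU.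
by exists (Ud *m b); rewrite mulmxA.
Qed.

Lemma ginv_solutionsP (b : 'cV[F]_p) : U *m Ud *m b = b ->
  forall z, U *m z = b <-> exists y, z = Ud *m b + (1%:M - Ud *m U) *m y.
Proof.
move=> hb z; split=> [hz|[y ->]].
  by exists z; rewrite -hz mulmxBl mul1mx mulmxA addrC subrK.
by rewrite mulmxDr [U *m (_ *m y)]mulmxA mulmxBr mulmx1 !mulmxA UUdU subrr mul0mx addr0.
Qed.

Lemma ginv_uniqueP (b : 'cV[F]_p) : U *m Ud *m b = b ->
  (forall z z', U *m z = b -> U *m z' = b -> z = z') <-> Ud *m U = 1%:M.
Proof.
move=> hb; split=> [uniq|UdU1 z z' hz hz']; last first.
  by rewrite -[z]mul1mx -[z']mul1mx -UdU1 -!mulmxA hz hz'.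
have kerUd (y : 'cV_q) : (1%:M - Ud *m U) *m y = 0.
  have sol : U *m (Ud *m b + (1%:M - Ud *m U) *m y) = b.
    by apply/(ginv_solutionsP hb); exists y.
  have := uniq _ _ sol (etrans (mulmxA _ _ _) hb).
  by rewrite -[RHS]addr0 => /addrI.
apply/eqP; rewrite eq_sym -subr_eq0; apply/eqP/matrixP => i j.
by have /matrixP/(_ i 0) := kerUd (delta_mx j 0); rewrite -colE !mxE.
Qed.

End GeneralizedInverse.

Lemma big_mxtens (V : nmodType) a b (G : 'I_(a * b) -> V) :
  \sum_c G c = \sum_(x < a) \sum_(y < b) G (mxtens_index (x, y)).
Proof.
rewrite pair_big /= (reindex (@mxtens_index a b)) /=; last first.
  by exists (@mxtens_unindex a b) => c _; [apply: mxtens_indexK | apply: mxtens_unindexK].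
by apply: eq_bigr => -[x y].
Qed.

Section Coordinates.
Variable R : realType.

Lemma Vec_mxtens_index n m (A : 'M[R]_(n, m)) j i :
  Vec A (mxtens_index (j, i)) 0 = A i j.
Proof. by rewrite /Vec mxE mxtens_indexK. Qed.

Lemma Vec_inj n m : injective (@Vec R n m).
Proof.
by move=> A B h; apply/matrixP => i j; rewrite -(Vec_mxtens_index A) h Vec_mxtens_index.
Qed.

Lemma Vec_mulmx p n m (A : 'M[R]_(p, n)) (Y : 'M[R]_(n, m)) :
  (Y^T *t 1%:M) *m Vec A = Vec (A *m Y).
Proof.
apply/matrixP => c o; rewrite ord1; case: (mxtens_indexP c) => j i.
rewrite Vec_mxtens_index !mxE big_mxtens; apply: eq_bigr => x _.
rewrite (bigD1 i) //= big1 => [|y /negPf ny]; last first.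
  by rewrite tensmxE [1%:M _ _]mxE eq_sym ny mulr0 mul0r.
by rewrite tensmxE Vec_mxtens_index !mxE eqxx mulr1 addr0 mulrC.
Qed.

Lemma Pmat_mul n r (S : 'I_r -> 'M[R]_n) (a : 'cV[R]_r) :
  Pmat S *m a = Vec (\sum_l a l 0 *: S l).
Proof.
apply/matrixP => c z; rewrite ord1 !mxE summxE; apply: eq_bigr => l _.
by rewrite !mxE mulrC.
Qed.

Lemma mulmx_Pmat n m r (S : 'I_r -> 'M[R]_n) (Y : 'M[R]_(n, m)) c l :
  ((Y^T *t 1%:M) *m Pmat S) c l = Vec (S l *m Y) c 0.
Proof.
rewrite -Vec_mulmx [LHS]mxE [RHS]mxE.
by apply: eq_bigr => c' _; rewrite [Pmat _ _ _]mxE.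
Qed.

(* The block of z selected by [sel R r i] holds the coordinates of A_i, so
   A_i is read from the block of index k-1-i. *)
Definition mx_of_coords k n r (S : 'I_r -> 'M[R]_n) (z : 'cV[R]_(k * r))
    (i : 'I_k) : 'M[R]_n :=
  \sum_l z (mxtens_index (rev_ord i, l)) 0 *: S l.

Lemma sel_mul k r (i : 'I_k) (z : 'cV[R]_(k * r)) :
  sel R r i *m z = \col_l z (mxtens_index (rev_ord i, l)) 0.
Proof.
have selE l x y : sel R r i l (mxtens_index (x, y)) = ((rev_ord i == x) && (l == y))%:R.
  rewrite /sel castmxE /=.
  have -> : cast_ord (esym (mul1n r)) l = mxtens_index (ord0, l) by apply: val_inj.
  by rewrite cast_ord_id tensmxE !mxE -natrM mulnb.
apply/matrixP => l o; rewrite ord1 !mxE big_mxtens (bigD1 (rev_ord i)) //=.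
rewrite [X in _ + X]big1 ?addr0 => [|x nx]; last first.
  by rewrite big1 // => y _; rewrite selE eq_sym (negPf nx) mul0r.
rewrite (bigD1 l) //= [X in _ + X]big1 ?addr0 => [|y ny]; last first.
  by rewrite selE eqxx eq_sym (negPf ny) mul0r.
by rewrite selE !eqxx mul1r.
Qed.

Lemma Pmat_sel_mul k n r (S : 'I_r -> 'M[R]_n) (i : 'I_k) (z : 'cV[R]_(k * r)) :
  Pmat S *m (sel R r i *m z) = Vec (mx_of_coords S z i).
Proof. by rewrite sel_mul Pmat_mul; congr Vec; apply: eq_bigr => l _; rewrite mxE. Qed.

Lemma Vec_blocksP k n r (S : 'I_r -> 'M[R]_n) (z : 'cV[R]_(k * r))
    (A : 'I_k -> 'M[R]_n) :
  (forall i, Vec (A i) = Pmat S *m (sel R r i *m z)) <-> A =1 mx_of_coords S z.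
Proof. by split=> eqA i; [apply: Vec_inj|]; rewrite eqA Pmat_sel_mul. Qed.

Lemma mx_of_coords_inj k n r (S : 'I_r -> 'M[R]_n) (z z' : 'cV[R]_(k * r)) :
  lin_indep S -> mx_of_coords S z =1 mx_of_coords S z' -> z = z'.
Proof.
move=> indepS h; apply/matrixP => c o; rewrite ord1; case: (mxtens_indexP c) => x l.
apply/eqP; rewrite -subr_eq0; apply/eqP.
apply: (indepS (fun l => z (mxtens_index (x, l)) 0 - z' (mxtens_index (x, l)) 0)).
have /eqP := h (rev_ord x); rewrite -subr_eq0 -sumrB => /eqP diff0.
rewrite -[RHS]diff0; apply: eq_bigr => l' _.
by rewrite scalerBl rev_ordK.
Qed.

Lemma Umat_mul k n m r (S : 'I_r -> 'M[R]_n) (E : 'M[R]_m) (X : 'M[R]_(n, m))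
    (z : 'cV[R]_(k * r)) :
  Umat S E X *m z = Vec (\sum_(i < k) mx_of_coords S z i *m X *m E ^+ i).
Proof.
apply/matrixP => c o; rewrite ord1; case: (mxtens_indexP c) => j i.
rewrite Vec_mxtens_index mxE big_mxtens summxE (reindex_inj rev_ord_inj) /=.
apply: eq_bigr => x _; rewrite !mulmx_suml summxE; apply: eq_bigr => l _.
rewrite mxE mxtens_indexK mulmx_Pmat Vec_mxtens_index rev_ordK.
by rewrite -!scalemxAl [RHS]mxE mulrC !mulmxA.
Qed.

End Coordinates.

Section Solutions.
Variables (R : realType) (k n m r : nat).
Variables (S : 'I_r -> 'M[R]_n) (E : 'M[R]_m) (X : 'M[R]_(n, m)).
Variable Ud : 'M[R]_(k * r, m * n).
Local Notation U := (Umat (k := k) S E X).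
Local Notation b := (bvec k E X).
Hypothesis UUdU : U *m Ud *m U = U.

Lemma is_solution_coords (z : 'cV[R]_(k * r)) :
  is_solution S E X (mx_of_coords S z) <-> U *m z = b.
Proof.
rewrite Umat_mul /bvec; split=> [[_ ->] // | /Vec_inj sol]; split=> // i.
by exists (fun l => z (mxtens_index (rev_ord i, l)) 0).
Qed.

Lemma is_solution_eq (A B : 'I_k -> 'M[R]_n) :
  A =1 B -> is_solution S E X A -> is_solution S E X B.
Proof.
move=> eqAB [spanA sol]; split=> [i|]; first by rewrite -eqAB.
by rewrite -sol; apply: eq_bigr => i _; rewrite eqAB.
Qed.

Lemma is_solutionP (A : 'I_k -> 'M[R]_n) :
  is_solution S E X A <-> exists z, U *m z = b /\ A =1 mx_of_coords S z.
Proof.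
split=> [solA|[z [sol eqA]]]; last first.
  by apply: (is_solution_eq (fun i => esym (eqA i))); apply/is_solution_coords.
have [a ha] := fin_all_exists (proj1 solA).
pose z : 'cV[R]_(k * r) :=
  \col_c a (rev_ord (mxtens_unindex c).1) (mxtens_unindex c).2.
have eqA : A =1 mx_of_coords S z.
  move=> i; rewrite ha /mx_of_coords; apply: eq_bigr => l _.
  by rewrite mxE mxtens_indexK /= rev_ordK.
by exists z; split=> //; apply/is_solution_coords; apply: is_solution_eq solA.
Qed.

Lemma solution_existsP :
  (exists A : 'I_k -> 'M[R]_n, is_solution S E X A) <-> U *m Ud *m b = b.
Proof.
rewrite -(ginv_solvableP UUdU).
split=> [[A /is_solutionP [z [sol _]]]|[z sol]]; first by exists z.
by exists (mx_of_coords S z); apply/is_solution_coords.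
Qed.

Lemma solutionsP : U *m Ud *m b = b -> forall A : 'I_k -> 'M[R]_n,
  is_solution S E X A <->
  exists y, A =1 mx_of_coords S (Ud *m b + (1%:M - Ud *m U) *m y).
Proof.
move=> hb A; rewrite is_solutionP; split=> [[z [sol eqA]]|[y eqA]].
  by have [y eqz] := proj1 (ginv_solutionsP UUdU hb z) sol; exists y; rewrite -eqz.
exists (Ud *m b + (1%:M - Ud *m U) *m y); split=> //.
by apply/(ginv_solutionsP UUdU hb); exists y.
Qed.

Lemma solution_unique_eq : U *m Ud *m b = b -> Ud *m U = 1%:M ->
  forall A : 'I_k -> 'M[R]_n, is_solution S E X A -> A =1 mx_of_coords S (Ud *m b).
Proof.
move=> hb UdU1 A /is_solutionP [z [sol eqA]] i; rewrite eqA; congr mx_of_coords.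
exact: (proj2 (ginv_uniqueP UUdU hb) UdU1 _ _ sol (etrans (mulmxA _ _ _) hb)).
Qed.

Lemma solution_uniqueP : lin_indep S ->
  (exists A : 'I_k -> 'M[R]_n, is_solution S E X A /\
     forall A', is_solution S E X A' -> forall i, A' i = A i)
  <-> (U *m Ud *m b = b /\ Ud *m U = 1%:M).
Proof.
move=> indepS; split=> [[A [solA uniqA]]|[hb UdU1]].
  have hb : U *m Ud *m b = b by apply/solution_existsP; exists A.
  split=> //; apply/(ginv_uniqueP UUdU hb) => z z'.
  move=> /is_solution_coords /uniqA eqz /is_solution_coords /uniqA eqz'.
  by apply: (mx_of_coords_inj indepS) => i; rewrite eqz eqz'.
exists (mx_of_coords S (Ud *m b)); split=> [|A' solA' i].
  by apply/is_solution_coords; rewrite mulmxA.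
exact: solution_unique_eq.
Qed.

End Solutions.

Theorem theorem2 (R : realType) (k n m r : nat)
  (S : 'I_r -> 'M[R]_n) (E : 'M[R]_m) (X : 'M[R]_(n, m))
  (Ud : 'M[R]_(k * r, m * n)) :
  (0 < k)%N -> (0 < n)%N -> (1 <= m)%N -> (m <= k * n)%N ->
  lin_indep S ->
  real_form_eigpair E X ->
  is_pinv (Umat (k := k) S E X) Ud ->
  let U := Umat (k := k) S E X in
  let b := bvec k E X in
  let P := Pmat S in
  [/\ (exists A : 'I_k -> 'M[R]_n, is_solution S E X A) <-> U *m Ud *m b = b,
      U *m Ud *m b = b ->
        forall A : 'I_k -> 'M[R]_n,
          is_solution S E X A <->
          exists y : 'cV[R]_(k * r), forall i : 'I_k,
            Vec (A i) = P *m (sel R r i *m (Ud *m b + (1%:M - Ud *m U) *m y)),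
      (exists A : 'I_k -> 'M[R]_n, is_solution S E X A /\
         forall A' : 'I_k -> 'M[R]_n, is_solution S E X A' -> forall i, A' i = A i)
        <-> (U *m Ud *m b = b /\ Ud *m U = 1%:M)
    & U *m Ud *m b = b -> Ud *m U = 1%:M ->
        forall A : 'I_k -> 'M[R]_n, is_solution S E X A ->
          forall i : 'I_k, Vec (A i) = P *m (sel R r i *m (Ud *m b))].
Proof.
move=> _ _ _ _ indepS _ [UUdU _ _ _] U b P.
split.
- exact: solution_existsP.
- move=> hb A; rewrite (solutionsP UUdU hb).
  by split=> -[y eqA]; exists y; apply/Vec_blocksP.
- exact: solution_uniqueP.
- by move=> hb UdU1 A solA; apply/Vec_blocksP; apply: solution_unique_eq.
Qed.
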